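(* Let $x\ge0$. Then for all $\alpha,\lambda\in[0,1]$, \[ 0\le\log\frac{1+\lambda x+(1+\sqrt{1-\alpha}\,x)^\lambda-(1+\lambda\sqrt{1-\alpha}\,x)}{(1+x)^\lambda}\le\alpha\frac{\lambda(1-\lambda)}{2}x^2 . \] *)

From Stdlib Require Import Reals.

(* Put y = sqrt(1 - alpha) x, so that 0 <= y <= x and x^2 - y^2 = alpha x^2.
   With g(t) = lambda t - (1 + t)^lambda, the numerator is (1 + x)^lambda + K
   where K = g(x) - g(y).  Since g'(t) = lambda (1 - (1 + t)^(lambda - 1)) lies
   between 0 and lambda (1 - lambda) t (Bernoulli), the mean value theorem gives
   0 <= K <= lambda (1 - lambda) (x^2 - y^2) / 2.  As (1 + x)^lambda >= 1, the
   logarithm of the ratio lies between 0 and K. *)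
From Stdlib Require Import Reals Lra.
Open Scope R_scope.

Lemma ln_nonneg z : 1 <= z -> 0 <= ln z.
Proof.
  intro Hz; destruct (Req_dec z 1) as [->|Hne]; [rewrite ln_1; lra|].
  rewrite <- ln_1; left; apply ln_increasing; lra.
Qed.

Lemma ln_le_sub_1 z : 0 < z -> ln z <= z - 1.
Proof.
  intro Hz; pose proof (exp_ineq1_le (ln z)) as Hexp.
  rewrite exp_ln in Hexp; lra.
Qed.

Lemma ln_div_add_bounds D K : 1 <= D -> 0 <= K -> 0 <= ln ((D + K) / D) <= K.
Proof.
  intros HD HK.
  replace ((D + K) / D) with (1 + K / D) by (field; lra).
  assert (HKD : 0 <= K / D <= K).
  { assert (HK' : K = K / D * D) by (field; lra).
    split; nra. }
  split; [apply ln_nonneg; lra|].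
  pose proof (ln_le_sub_1 (1 + K / D)); lra.
Qed.

Lemma Rpower_ge_1 a r : 1 <= a -> 0 <= r -> 1 <= Rpower a r.
Proof. intros Ha Hr; rewrite <- (Rpower_O a) by lra; apply Rle_Rpower; lra. Qed.

Lemma Rpower_le_1 a r : 1 <= a -> r <= 0 -> Rpower a r <= 1.
Proof. intros Ha Hr; rewrite <- (Rpower_O a) by lra; apply Rle_Rpower; lra. Qed.

Lemma Rpower_Bernoulli c r : -1 < c -> r <= 0 -> 1 + r * c <= Rpower (1 + c) r.
Proof.
  intros Hc Hr; unfold Rpower.
  pose proof (exp_ineq1_le (r * ln (1 + c))).
  pose proof (ln_le_sub_1 (1 + c) ltac:(lra)).
  nra.
Qed.

Lemma nondecreasing_of_derive_nonneg (f f' : R -> R) a b : a <= b ->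
  (forall c, a <= c <= b -> derivable_pt_lim f c (f' c)) ->
  (forall c, a <= c <= b -> 0 <= f' c) -> f a <= f b.
Proof.
  intros Hab Hd Hpos; destruct (Req_dec a b) as [->|Hne]; [lra|].
  destruct (MVT_cor2 f f' a b ltac:(lra) Hd) as [c [Hmvt Hc]].
  pose proof (Hpos c ltac:(lra)); nra.
Qed.

Lemma derivable_pt_lim_Rpower_1plus r c : -1 < c ->
  derivable_pt_lim (fun t => Rpower (1 + t) r) c (r * Rpower (1 + c) (r - 1)).
Proof.
  intro Hc; rewrite <- (Rmult_1_r (r * _)).
  apply (derivable_pt_lim_comp (fun t => 1 + t) (fun u => Rpower u r)).
  - change (derivable_pt_lim (fct_cte 1 + id)%F c 1).
    replace 1 with (0 + 1) at 2 by ring.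
    apply derivable_pt_lim_plus;
      [apply derivable_pt_lim_const | apply derivable_pt_lim_id].
  - apply derivable_pt_lim_power; lra.
Qed.

Definition power_gap r t := r * t - Rpower (1 + t) r.

Lemma derivable_pt_lim_power_gap r c : -1 < c ->
  derivable_pt_lim (power_gap r) c (r - r * Rpower (1 + c) (r - 1)).
Proof.
  intro Hc; apply (derivable_pt_lim_minus (fun t => r * t)).
  - rewrite <- (Rmult_1_r r) at 1.
    apply (derivable_pt_lim_scal id), derivable_pt_lim_id.
  - exact (derivable_pt_lim_Rpower_1plus r c Hc).
Qed.

Lemma power_gap_le r y x : 0 <= r <= 1 -> 0 <= y <= x ->
  power_gap r y <= power_gap r x.
Proof.
  intros Hr Hyx.
  apply (nondecreasing_of_derive_nonneg _
           (fun c => r - r * Rpower (1 + c) (r - 1)) y x ltac:(lra)).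
  - intros c Hc; apply derivable_pt_lim_power_gap; lra.
  - intros c Hc; pose proof (Rpower_le_1 (1 + c) (r - 1) ltac:(lra) ltac:(lra)).
    nra.
Qed.

Lemma power_gap_increment_le r y x : 0 <= r <= 1 -> 0 <= y <= x ->
  power_gap r x - power_gap r y <= r * (1 - r) / 2 * (x ^ 2 - y ^ 2).
Proof.
  intros Hr Hyx.
  set (q := r * (1 - r) / 2).
  enough (q * y ^ 2 - power_gap r y <= q * x ^ 2 - power_gap r x) by lra.
  apply (nondecreasing_of_derive_nonneg (fun t => q * t ^ 2 - power_gap r t)
           (fun c => q * (2 * c) - (r - r * Rpower (1 + c) (r - 1))) y x ltac:(lra)).
  - intros c Hc; apply (derivable_pt_lim_minus (fun t => q * t ^ 2)).
    + apply (derivable_pt_lim_scal (fun t => t ^ 2)).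
      replace (2 * c) with (INR 2 * c ^ Nat.pred 2) by (simpl; ring).
      apply derivable_pt_lim_pow.
    + apply derivable_pt_lim_power_gap; lra.
  - intros c Hc; pose proof (Rpower_Bernoulli c (r - 1) ltac:(lra) ltac:(lra)).
    unfold q; nra.
Qed.

Theorem lemma2p6 (x : R) (hx : 0 <= x) (alpha lambda : R)
  (ha : 0 <= alpha <= 1) (hl : 0 <= lambda <= 1) :
  0 <= ln ((1 + lambda * x + Rpower (1 + sqrt (1 - alpha) * x) lambda
            - (1 + lambda * sqrt (1 - alpha) * x)) / Rpower (1 + x) lambda)
  /\
  ln ((1 + lambda * x + Rpower (1 + sqrt (1 - alpha) * x) lambda
            - (1 + lambda * sqrt (1 - alpha) * x)) / Rpower (1 + x) lambda)
  <= alpha * (lambda * (1 - lambda) / 2) * x ^ 2.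
Proof.
  set (s := sqrt (1 - alpha)).
  assert (Hs2 : s * s = 1 - alpha) by (apply sqrt_sqrt; lra).
  assert (Hs0 : 0 <= s) by apply sqrt_pos.
  assert (Hs : 0 <= s <= 1) by (split; nra).
  assert (Hyx : 0 <= s * x <= x) by (split; nra).
  set (K := power_gap lambda x - power_gap lambda (s * x)).
  replace (1 + lambda * x + Rpower (1 + s * x) lambda - (1 + lambda * s * x))
    with (Rpower (1 + x) lambda + K) by (unfold K, power_gap; ring).
  assert (HK0 : 0 <= K) by (unfold K; pose proof (power_gap_le lambda (s * x) x hl Hyx); lra).
  assert (HK1 : K <= alpha * (lambda * (1 - lambda) / 2) * x ^ 2).
  { unfold K; replace (alpha * (lambda * (1 - lambda) / 2) * x ^ 2)
      with (lambda * (1 - lambda) / 2 * (x ^ 2 - (s * x) ^ 2)) by (simpl; nra).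
    pose proof (power_gap_increment_le lambda (s * x) x hl Hyx); lra. }
  assert (HD : 1 <= Rpower (1 + x) lambda) by (apply Rpower_ge_1; lra).
  pose proof (ln_div_add_bounds _ K HD HK0); lra.
Qed.
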